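(* Let $\hat{a}\in\mathbb{C}$, $\hat{a}\neq 0$, and $\hat{d}\in\mathbb{Z}$, $\hat{d}\geq 0$. Let $F_0,F_1$ be causal filters with $\gcd(F_0,F_1)=z^{-d_F}$ where $0\leq d_F\leq \hat{d}$, and let $M\in\mathbb{Z}$ satisfy $0\leq M\leq \hat{d}-d_F$. (i) If $F_0\neq 0$, there exists a unique causal complement $(R_0,R_1)$ to $(F_0,F_1)$ for inhomogeneity $\hat{a}z^{-\hat{d}}$ that is degree-reducing modulo $M$ in $F_0$, i.e. with $z^{-M}\mid R_0$, $z^{-M}\mid R_1$ and $\deg(R_0)<\deg(F_0)-\deg\gcd(F_0,F_1)+M$. (ii) If $F_1\neq 0$, there exists a unique causal complement $(R'_0,R'_1)$ to $(F_0,F_1)$ for inhomogeneity $\hat{a}z^{-\hat{d}}$ that is degree-reducing modulo $M$ in $F_1$, i.e. with $z^{-M}\mid R'_0$, $z^{-M}\mid R'_1$ and $\deg(R'_1)<\deg(F_1)-\deg\gcd(F_0,F_1)+M$. (iii) If $F_0,F_1\neq 0$ and $(R_0,R_1)$, $(R'_0,R'_1)$ are the complements of (i) and (ii), then $(R_0,R_1)=(R'_0,R'_1)$ if and only if $\hat{d}<\deg(F_0)+\deg(F_1)-\deg\gcd(F_0,F_1)+M$.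
   Context: A causal filter is a polynomial in $z^{-1}$ with complex coefficients; $\deg$ denotes degree as a polynomial in $z^{-1}$ (with $\deg 0=-\infty$). Divisibility and gcd are taken in $\mathbb{C}[z^{-1}]$ (gcd determined up to nonzero constant; ''$\gcd(F_0,F_1)=z^{-d_F}$'' means the gcd is $z^{-d_F}$ up to a nonzero constant). Given causal $F_0,F_1$, an ordered pair $(R_0,R_1)$ of causal filters is a causal complement to $(F_0,F_1)$ for inhomogeneity $\hat{a}z^{-\hat{d}}$ if $F_0(z)R_1(z)-F_1(z)R_0(z)=\hat{a}z^{-\hat{d}}$. The pair $(R_0,R_1)$ has multiplicity $M$ if $z^{-M}$ divides both $R_0$ and $R_1$. For $\ell\in\{0,1\}$, a causal complement $(R_0,R_1)$ is degree-reducing modulo $M$ in $F_\ell$ if it has multiplicity $M$ and $\deg(R_\ell)<\deg(F_\ell)-\deg\gcd(F_0,F_1)+M$. *)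

From mathcomp Require Import all_boot all_order all_algebra.
From mathcomp Require Import complex.
From mathcomp Require Import reals.
Set Implicit Arguments. Unset Strict Implicit. Unset Printing Implicit Defensive.
Import Order.TTheory GRing.Theory Num.Theory.
Local Open Scope ring_scope.

(* Causal filters are polynomials in z^{-1}: the indeterminate 'X of
   {poly C} stands for z^{-1}.  Coefficients: C = R[i], R : realType
   (the complex numbers). *)

(* Degree as a polynomial in z^{-1}; convention deg 0 = -1 (stands for -oo). *)
Definition deg (K : nzRingType) (p : {poly K}) : int := (size p)%:Z - 1.

Section Filters.
Variable K : fieldType.

Definition causal_complement (F0 F1 : {poly K}) (a : K) (d : nat)
  (R : {poly K} * {poly K}) : Prop :=
  F0 * R.2 - F1 * R.1 = a *: 'X^d.

Definition has_multiplicity (M : nat) (R : {poly K} * {poly K}) : Prop :=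
  ('X^M %| R.1) /\ ('X^M %| R.2).

Definition sel (l : 'I_2) (P : {poly K} * {poly K}) : {poly K} :=
  if val l == 0%N then P.1 else P.2.

Definition degree_reducing_complement (l : 'I_2) (F0 F1 : {poly K})
  (a : K) (d M : nat) (R : {poly K} * {poly K}) : Prop :=
  [/\ causal_complement F0 F1 a d R, has_multiplicity M R &
      deg (sel l R) < deg (sel l (F0, F1)) - deg (gcdp F0 F1) + M%:Z].

End Filters.

From mathcomp Require Import all_boot all_order all_algebra.
From mathcomp Require Import complex.
From mathcomp Require Import reals.
From mathcomp Require Import zify ring.
Set Implicit Arguments. Unset Strict Implicit. Unset Printing Implicit Defensive.
Import Order.TTheory GRing.Theory Num.Theory.
Local Open Scope ring_scope.

(* Write F_l = f_l z^{-dF} with f_0, f_1 coprime, and d = dF + M + e.  A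
   complement of multiplicity M is R = r z^{-M} with f_0 r_1 - f_1 r_0 = a z^{-e},
   and the degree bound on R_l becomes deg r_l < deg f_l.  Coprimality makes
   the solutions an affine family r + k (f_0, f_1), so division with remainder
   by f_l singles out exactly one reduced solution.  The solution reduced in
   r_0 is also reduced in r_1 iff e < deg f_0 + deg f_1: comparing degrees in
   f_0 r_1 = f_1 r_0 + a z^{-e} with deg r_0 < deg f_0 gives both directions. *)

Section CoprimeEquation.
Variable K : fieldType.

Lemma coprimep_sub_mul_exists_uniq (p q c : {poly K}) :
  coprimep p q -> p != 0 ->
  exists! xy : {poly K} * {poly K},
    p * xy.2 - q * xy.1 = c /\ (size xy.1 < size p)%N.
Proof.
move=> cpq p0; have /Bezout_eq1_coprimepP [[u v] /= uv1] := cpq.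
have [[k r] /= cv_eq r_lt] : exists2 kr : {poly K} * {poly K},
    - (c * v) = kr.1 * p + kr.2 & (size kr.2 < size p)%N.
  by exists ((- (c * v)) %/ p, (- (c * v)) %% p); rewrite /= -?divp_eq ?ltn_modp.
set y0 := c * u - q * k.
have sol0 : p * y0 - q * r = c.
  have -> : r = - (c * v) - k * p by rewrite cv_eq; ring.
  by rewrite -[RHS]mulr1 -uv1 /y0; ring.
exists (r, y0); split=> // -[x y] /= [sol x_lt].
have diff_eq : p * (y - y0) - q * (x - r) = (p * y - q * x) - (p * y0 - q * r)
  by ring.
move: diff_eq; rewrite sol sol0 subrr => /eqP; rewrite subr_eq0 => /eqP diff_eq.
have dvd_xr : p %| x - r by rewrite -(Gauss_dvdpr _ cpq) -diff_eq dvdp_mulr.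
have size_xr : (size (x - r)%R < size p)%N.
  by apply: leq_ltn_trans (size_polyD _ _) _; rewrite size_polyN gtn_max x_lt r_lt.
have x_eq : x = r.
  by apply: subr0_eq; rewrite -(modp_small size_xr); exact: modp_eq0.
move: diff_eq; rewrite x_eq subrr mulr0 => /eqP; rewrite mulf_eq0 (negbTE p0).
by rewrite subr_eq0 => /eqP ->.
Qed.

Lemma size_cofactor_ltE (p q x y : {poly K}) (a : K) (e : nat) :
  p != 0 -> q != 0 -> a != 0 -> p * y - q * x = a *: 'X^e ->
  (size x < size p)%N -> (size y < size q)%N = (e.+3 <= size p + size q)%N.
Proof.
move=> p0 q0 a0 sol x_lt.
have size_rhs : size (a *: 'X^e : {poly K}) = e.+1.
  by rewrite size_scale // size_polyXn.
have sp : (0 < size p)%N by rewrite size_poly_gt0.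
have sq : (0 < size q)%N by rewrite size_poly_gt0.
have size_qx : (size (q * x)%R <= (size q + size x).-1)%N by apply: size_polyMleq.
apply/idP/idP => [y_lt|].
  have size_py : (size (p * y)%R <= (size p + size y).-1)%N by apply: size_polyMleq.
  have : (e.+1 <= maxn (size (p * y)%R) (size (q * x)%R))%N.
    by rewrite -size_rhs -sol -(size_polyN (q * x)); apply: size_polyD.
  lia.
have [-> //|y0] := eqVneq y 0; first by rewrite size_poly0.
have : ((size p + size y).-1 <= maxn e.+1 (size (q * x)%R))%N.
  by rewrite -size_mul // -size_rhs -(subrK (q * x) (p * y)) sol; apply: size_polyD.
lia.
Qed.

End CoprimeEquation.

Section ReducedComplement.
Variable K : fieldType.
Implicit Types (r : {poly K} * {poly K}).

Definition mulXn_pair (n : nat) r : {poly K} * {poly K} := (r.1 * 'X^n, r.2 * 'X^n).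

Definition reduced_complement (l : 'I_2) (f0 f1 : {poly K}) (a : K) (e : nat) r :=
  causal_complement f0 f1 a e r /\ (size (sel l r) < size (sel l (f0, f1)))%N.

Lemma sel_mulXn_pair (l : 'I_2) n r : sel l (mulXn_pair n r) = sel l r * 'X^n.
Proof. by rewrite /sel; case: ifP. Qed.

Lemma mulXn_pair_inj n : injective (mulXn_pair n).
Proof.
have Xn_reg := mulIf (monic_neq0 (monicXn K n)).
by move=> [x y] [x' y'] [/Xn_reg -> /Xn_reg ->].
Qed.

Lemma reduced_complement_swap (f0 f1 : {poly K}) a e r :
  reduced_complement 1 f0 f1 a e r <-> reduced_complement 0 f1 f0 (- a) e (r.2, r.1).
Proof.
rewrite /reduced_complement /causal_complement /= scaleNr -opprB.
split=> -[sol lt]; split=> //.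
  by rewrite -sol opprK.
by rewrite sol opprK.
Qed.

Lemma reduced_complement_exists_uniq (l : 'I_2) (f0 f1 : {poly K}) a e :
  coprimep f0 f1 -> sel l (f0, f1) != 0 ->
  exists! r, reduced_complement l f0 f1 a e r.
Proof.
move=> cop; case: l => -[|[|//]] lt2;
  [have -> : Ordinal lt2 = 0 by apply: val_inj
  |have -> : Ordinal lt2 = 1 by apply: val_inj] => f_neq0.
  exact: coprimep_sub_mul_exists_uniq.
rewrite coprimep_sym in cop.
have [r [r_red r_uniq]] :=
  coprimep_sub_mul_exists_uniq (- a *: 'X^e) cop f_neq0.
exists (r.2, r.1); split.
  by apply/reduced_complement_swap; case: r r_red {r_uniq}.
by move=> r' /reduced_complement_swap /r_uniq ->; case: r'.
Qed.

Lemma deg_mulXn_ltE (f r : {poly K}) (m n : nat) : f != 0 ->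
  (deg (r * 'X^m) < deg (f * 'X^n) - n%:Z + m%:Z) = (size r < size f)%N.
Proof.
move=> f0; have sf_gt0 : (0 < size f)%N by rewrite size_poly_gt0.
rewrite /deg (size_mulXn _ f0) !PoszD; set sf := size f in sf_gt0 *.
have [->|r0] := eqVneq r 0; first by rewrite mul0r size_poly0 sf_gt0; apply/idP; lia.
by rewrite size_mulXn // PoszD; set sr := size r; apply/idP/idP => ?; lia.
Qed.

Lemma gcdp_mulXn_eqpXn (f0 f1 : {poly K}) n :
  (gcdp (f0 * 'X^n) (f1 * 'X^n) %= 'X^n) = coprimep f0 f1.
Proof.
rewrite -gcdp_eqp1 (eqp_ltrans (gcdp_mul2r _ _ _)).
by rewrite -[RHS](eqp_mul2r _ _ (monic_neq0 (monicXn K n))) mul1r.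
Qed.

Lemma causal_complement_mulXn (f0 f1 : {poly K}) a n m e r :
  causal_complement (f0 * 'X^n) (f1 * 'X^n) a (n + m + e) (mulXn_pair m r) <->
  causal_complement f0 f1 a e r.
Proof.
rewrite /causal_complement /=.
have -> : a *: 'X^(n + m + e) = (a *: 'X^e) * 'X^(n + m) :> {poly K}.
  by rewrite -scalerAl -exprD addnC.
have -> : f0 * 'X^n * (r.2 * 'X^m) - f1 * 'X^n * (r.1 * 'X^m) =
          (f0 * r.2 - f1 * r.1) * 'X^(n + m) by rewrite exprD; ring.
by split=> [/(mulIf (monic_neq0 (monicXn K _)))|->].
Qed.

Lemma has_multiplicityP M (Q : {poly K} * {poly K}) :
  has_multiplicity M Q <-> exists r, Q = mulXn_pair M r.
Proof.
case: Q => q1 q2; rewrite /has_multiplicity /=.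
split=> [[/dvdpP [r1 ->] /dvdpP [r2 ->]]|[r [-> ->]]]; first by exists (r1, r2).
by split; apply: dvdp_mull.
Qed.

End ReducedComplement.

Section FactoredFilters.
Variables (K : fieldType) (f0 f1 : {poly K}) (a : K) (dF M e : nat).
Hypothesis coprime_f : coprimep f0 f1.

Local Notation F0 := (f0 * 'X^dF).
Local Notation F1 := (f1 * 'X^dF).
Local Notation d := (dF + M + e)%N.

Lemma deg_gcdp_mulXn : deg (gcdp F0 F1) = dF.
Proof.
rewrite /deg (eqp_size (_ : gcdp F0 F1 %= 'X^dF)) ?gcdp_mulXn_eqpXn //.
by rewrite size_polyXn -addn1 PoszD addrK.
Qed.

Lemma degree_reducing_complement_mulXnE (l : 'I_2) (Q : {poly K} * {poly K}) :
  sel l (f0, f1) != 0 ->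
  degree_reducing_complement l F0 F1 a d M Q <->
  exists2 r, Q = mulXn_pair M r & reduced_complement l f0 f1 a e r.
Proof.
move=> fl_neq0.
have deg_redE (r : {poly K} * {poly K}) :
    (deg (sel l (mulXn_pair M r)) < deg (sel l (F0, F1)) - deg (gcdp F0 F1) + M%:Z)
    = (size (sel l r) < size (sel l (f0, f1)))%N.
  rewrite deg_gcdp_mulXn sel_mulXn_pair.
  by rewrite -[(F0, F1)]/(mulXn_pair dF (f0, f1)) sel_mulXn_pair deg_mulXn_ltE.
split=> [[cc /has_multiplicityP [r QE] lt]|[r -> [cc lt]]].
  by exists r => //; move: cc lt; rewrite QE causal_complement_mulXn deg_redE.
split; [exact/causal_complement_mulXn | by apply/has_multiplicityP; exists r |].
by rewrite deg_redE.
Qed.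

Lemma degree_reducing_complement_exists_uniq (l : 'I_2) :
  sel l (f0, f1) != 0 ->
  exists! Q, degree_reducing_complement l F0 F1 a d M Q.
Proof.
move=> fl_neq0.
have [r [r_red r_uniq]] := reduced_complement_exists_uniq a e coprime_f fl_neq0.
exists (mulXn_pair M r); split.
  by apply/degree_reducing_complement_mulXnE => //; exists r.
by move=> Q /degree_reducing_complement_mulXnE [//|r' -> /r_uniq ->].
Qed.

Lemma degree_reducing_complements_eqE (Q Q' : {poly K} * {poly K}) :
  a != 0 -> f0 != 0 -> f1 != 0 ->
  degree_reducing_complement 0 F0 F1 a d M Q ->
  degree_reducing_complement 1 F0 F1 a d M Q' ->
  (Q = Q' <-> d%:Z < deg F0 + deg F1 - deg (gcdp F0 F1) + M%:Z).
Proof.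
move=> a_neq0 f0_neq0 f1_neq0.
move=> /degree_reducing_complement_mulXnE [//|r -> [r_sol r_lt]].
move=> /degree_reducing_complement_mulXnE [//|r' -> r'_red].
have sizeE : (d%:Z < deg F0 + deg F1 - deg (gcdp F0 F1) + M%:Z) =
             (e.+3 <= size f0 + size f1)%N.
  rewrite deg_gcdp_mulXn /deg !size_mulXn // !PoszD.
  by set s0 := size f0; set s1 := size f1; apply/idP/idP => ?; lia.
rewrite sizeE -(size_cofactor_ltE f0_neq0 f1_neq0 a_neq0 r_sol r_lt).
split=> [/mulXn_pair_inj ->|r2_lt]; first by case: r'_red.
have [r0 [_ r0_uniq]] :=
  reduced_complement_exists_uniq (l := 1) a e coprime_f f1_neq0.
by rewrite -(r0_uniq r) // -(r0_uniq r').
Qed.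

End FactoredFilters.

Theorem corollary2p5 (R : realType) (a : R[i]) (d : nat)
  (F0 F1 : {poly R[i]}) (dF M : nat) :
  a != 0 ->
  gcdp F0 F1 %= 'X^dF ->
  (dF <= d)%N ->
  (M <= d - dF)%N ->
  [/\ F0 != 0 -> exists! Q : {poly R[i]} * {poly R[i]},
          degree_reducing_complement (0 : 'I_2) F0 F1 a d M Q,
      F1 != 0 -> exists! Q' : {poly R[i]} * {poly R[i]},
          degree_reducing_complement (1 : 'I_2) F0 F1 a d M Q' &
      F0 != 0 -> F1 != 0 ->
      forall Q Q' : {poly R[i]} * {poly R[i]},
        degree_reducing_complement (0 : 'I_2) F0 F1 a d M Q ->
        degree_reducing_complement (1 : 'I_2) F0 F1 a d M Q' ->
        (Q = Q' <-> d%:Z < deg F0 + deg F1 - deg (gcdp F0 F1) + M%:Z)].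
Proof.
move=> a_neq0 gcdE le_dF_d le_M.
have [f0 F0E] : exists f0, F0 = f0 * 'X^dF.
  by apply/dvdpP; rewrite -(eqp_dvdl _ gcdE) dvdp_gcdl.
have [f1 F1E] : exists f1, F1 = f1 * 'X^dF.
  by apply/dvdpP; rewrite -(eqp_dvdl _ gcdE) dvdp_gcdr.
subst F0 F1.
have coprime_f : coprimep f0 f1 by rewrite -(gcdp_mulXn_eqpXn _ _ dF).
have -> : d = (dF + M + (d - dF - M))%N by rewrite -addnA subnKC // subnKC.
have factor_neq0 f : f * 'X^dF != 0 -> f != 0.
  by apply: contraNneq => ->; rewrite mul0r.
split=> [/factor_neq0 ? | /factor_neq0 ? | /factor_neq0 ? /factor_neq0 ? Q Q'].
- exact: degree_reducing_complement_exists_uniq.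
- exact: degree_reducing_complement_exists_uniq.
- exact: degree_reducing_complements_eqE.
Qed.
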